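(* For every integer $n\ge 0$, \[ (-1)^n d_{n,q}=\frac{1}{n!}\sum_{m=0}^{n}2^{2n-m}B_{m,q}S_1(n,m). \]
   Context: Let $p$ be a fixed odd prime, $\mathbb{C}_p$ the completion of the algebraic closure of $\mathbb{Q}_p$, with $|p|_p=1/p$. Let $q\in\mathbb{C}_p$ with $|1-q|_p<p^{-1/(p-1)}$, and $\log$ denotes the $p$-adic logarithm. The $q$-Bernoulli numbers $B_{n,q}$ are defined by \[ \frac{(q-1)+\frac{q-1}{\log q}t}{qe^t-1}=\sum_{n=0}^\infty B_{n,q}\frac{t^n}{n!}. \] The numbers $d_{n,q}$ ($q$-analogues of the Catalan–Daehee numbers) are defined by \[ \frac{q-1+\frac{q-1}{\log q}\cdot\frac12\log(1-4t)}{q\sqrt{1-4t}-1}=\sum_{n=0}^{\infty}d_{n,q}t^n, \] for $t\in\mathbb{C}_p$ with $|t|_p<p^{-1/(p-1)}$. $S_1(n,m)$ are the Stirling numbers of the first kind, defined by $(x)_n=\sum_{l=0}^n S_1(n,l)x^l$, where $(x)_0=1$ and $(x)_n=x(x-1)\cdots(x-n+1)$ for $n\ge1$. *)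

From HB Require Import structures.
From mathcomp Require Import all_boot all_order all_algebra.
Set Implicit Arguments. Unset Strict Implicit. Unset Printing Implicit Defensive.
Import Order.TTheory GRing.Theory Num.Theory.
Local Open Scope ring_scope.

(* Formal power series over a field K are represented by their coefficient
   sequences  nat -> K  (coefficient of t^n). *)

Definition smul (K : fieldType) (a b : nat -> K) (n : nat) : K :=
  \sum_(i < n.+1) a i * b (n - i)%N.

Definition exp_ser (K : fieldType) (k : nat) : K := (k`!%:R)^-1.

Definition gbinom (K : fieldType) (a : K) (k : nat) : K :=
  (\prod_(i < k) (a - i%:R)) / k`!%:R.

(* sqrt(1-4t) = (1-4t)^(1/2) = sum_k binom(1/2,k) (-4)^k t^k *)
Definition sqrt1m4_ser (K : fieldType) (k : nat) : K :=
  gbinom (2^-1 : K) k * (-4) ^+ k.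

Definition log1m4_ser (K : fieldType) (k : nat) : K :=
  if k == 0%N then 0 else - ((4 ^+ k) / k%:R).

Definition S1 (n l : nat) : int :=
  (\prod_(i < n) ('X - (i%:Z)%:P) : {poly int})`_l.

(* B is the sequence of q-Bernoulli numbers: its exponential generating
   function sum B_n t^n/n! satisfies
   (q e^t - 1) * sum B_n t^n/n! = (q-1) + ((q-1)/log q) t,
   where lq plays the role of log q. *)
Definition is_qBernoulli (K : fieldType) (q lq : K) (B : nat -> K) : Prop :=
  forall n,
    smul (fun k => q * exp_ser K k - (k == 0%N)%:R) (fun k => B k / k`!%:R) n
    = (if n == 0%N then q - 1 else if n == 1%N then (q - 1) / lq else 0).

(* d is the sequence of q-Catalan-Daehee numbers:
   (q sqrt(1-4t) - 1) * sum d_n t^n = (q-1) + ((q-1)/log q) (1/2) log(1-4t). *)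
Definition is_qCatalanDaehee (K : fieldType) (q lq : K) (d : nat -> K) : Prop :=
  forall n,
    smul (fun k => q * sqrt1m4_ser K k - (k == 0%N)%:R) d n
    = (if n == 0%N then q - 1 else 0) + (q - 1) / lq * 2^-1 * log1m4_ser K n.

From HB Require Import structures.
From mathcomp Require Import all_boot all_order all_algebra.
From mathcomp Require Import ring zify.
Set Implicit Arguments. Unset Strict Implicit. Unset Printing Implicit Defensive.
Import Order.TTheory GRing.Theory Num.Theory.
Local Open Scope ring_scope.

(* Let L(t) = log(1 - 4t) / 2, so that exp L = sqrt(1 - 4t).  Substituting t := L(t)
   in (q e^t - 1) sum_m B_m t^m / m! = (q - 1) + (q - 1) t / log q turns the equation
   defining the q-Bernoulli numbers into the one defining the d_n, whose solution is
   unique because q != 1; hence sum_n d_n t^n = sum_m B_m L^m / m!.  The coefficient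
   of t^n is then read off the Stirling expansion
   log(1 + c t)^m / m! = sum_n S1(n, m) c^n t^n / n!, which follows from
   (1 + c t) log(1 + c t)' = c.  Series are truncated to polynomials, on which
   substituting a series without constant term is polynomial composition. *)

Lemma S1_0n k : S1 0 k = (k == 0)%:R.
Proof. by rewrite /S1 big_ord0 coef1. Qed.

Lemma S1_n0 i : S1 i.+1 0 = 0.
Proof. by rewrite /S1 big_ord_recl coef0M /= coefB coefX coefC /= subr0 mul0r. Qed.

Lemma S1S i k : S1 i.+1 k.+1 = S1 i k - i%:Z * S1 i k.+1.
Proof.
by rewrite /S1 big_ord_recr /= mulrBr coefB coefMX -mulrN coefMC mulrC mulrN.
Qed.

Lemma big_ord_vanish (V : nmodType) n m (F : nat -> V) :
  (n <= m)%N -> (forall j, (n <= j)%N -> F j = 0) ->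
  \sum_(j < m) F j = \sum_(j < n) F j.
Proof.
move=> le_nm F0; rewrite -(subnKC le_nm) big_split_ord /= [X in _ + X]big1 ?addr0 //.
by move=> j _; rewrite F0 ?leq_addr.
Qed.

Lemma sum_S1_expr (K : comNzRingType) i M (x : K) : (i < M)%N ->
  \sum_(j < M) (S1 i j)%:~R * x ^+ j = \prod_(l < i) (x - l%:R).
Proof.
move=> lt_iM; pose P := map_poly intr (\prod_(l < i) ('X - (l%:Z)%:P)) : {poly K}.
have coefP j : P`_j = (S1 i j)%:~R by rewrite coef_map.
have sizeP : (size P <= M)%N.
  rewrite (leq_trans (size_poly _ _)) // size_prod_XsubC.
  by rewrite [index_enum _]unlock -enumT size_enum_ord.
rewrite (eq_bigr (fun j : 'I_M => P`_j * x ^+ j)) => [|j _]; last by rewrite coefP.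
rewrite -horner_coef_wide // /P map_prod_XsubC horner_prod; apply: eq_bigr => l _.
by rewrite hornerXsubC.
Qed.

Section Truncation.
Variable R : comNzRingType.

Lemma coef_XM_exp_lt (r : {poly R}) j i : (i < j)%N -> (('X * r) ^+ j)`_i = 0.
Proof. by move=> lt_ij; rewrite exprMn coefXnM lt_ij. Qed.

Lemma coef_comp_poly_XM (p r : {poly R}) M i : (i < M)%N ->
  (p \Po ('X * r))`_i = \sum_(j < M) p`_j * (('X * r) ^+ j)`_i.
Proof.
move=> lt_iM; rewrite coef_comp_poly.
have F0 j : (minn (size p) M <= j)%N -> p`_j * (('X * r) ^+ j)`_i = 0.
  rewrite geq_min => /orP[/(nth_default 0) -> | le_Mj]; first by rewrite mul0r.
  by rewrite coef_XM_exp_lt ?mulr0 // (leq_trans lt_iM).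
by rewrite (big_ord_vanish _ F0) ?geq_minl // [RHS](big_ord_vanish _ F0) ?geq_minr.
Qed.

Lemma eq_coef_comp_poly_XM (p p' r : {poly R}) M i :
  (forall j, (j < M)%N -> p`_j = p'`_j) -> (i < M)%N ->
  (p \Po ('X * r))`_i = (p' \Po ('X * r))`_i.
Proof.
move=> eq_pp' lt_iM; rewrite !(coef_comp_poly_XM _ _ lt_iM).
by apply: eq_bigr => j _; rewrite eq_pp'.
Qed.

End Truncation.

Section LogSeries.
Variable K : fieldType.
Hypothesis charK : [pchar K] =i pred0.

Lemma natS_neq0 n : (n.+1%:R : K) != 0.
Proof. by rewrite ((pcharf0P K).1 charK). Qed.

Lemma fact_neq0 n : (n`!%:R : K) != 0.
Proof. by rewrite ((pcharf0P K).1 charK) -lt0n fact_gt0. Qed.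

Variables (a c : K) (M : nat).

(* The series a log(1 + c t), truncated after degree M. *)
Definition log_poly : {poly K} := 'X * \poly_(i < M) (a * c * (-c) ^+ i / i.+1%:R).

Definition exp_poly : {poly K} := \poly_(j < M) exp_ser K j.

Lemma coef_log_poly0 : log_poly`_0 = 0.
Proof. by rewrite coefXM. Qed.

Lemma coef_log_polyS i : (i < M)%N -> log_poly`_i.+1 = a * c * (-c) ^+ i / i.+1%:R.
Proof. by move=> lt_iM; rewrite coefXM coef_poly lt_iM. Qed.

Lemma coef_deriv_log_poly i : (i < M)%N -> log_poly^`()`_i = a * c * (-c) ^+ i.
Proof.
move=> lt_iM; rewrite coef_deriv coef_log_polyS // -[_ *+ _.+1]mulr_natr.
by rewrite divfK ?natS_neq0.
Qed.

Lemma coef_log_poly_ode i : (i < M)%N ->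
  ((1 + c *: 'X) * log_poly^`())`_i = (i == 0)%:R * (a * c).
Proof.
move=> lt_iM; rewrite mulrDl mul1r -scalerAl coefD coefZ coefXM.
case: i lt_iM => [|i] lt_iM /=; first by rewrite coef_deriv_log_poly //; ring.
by rewrite !coef_deriv_log_poly ?(ltnW lt_iM) // exprS; ring.
Qed.

(* Compare coefficients in (1 + c t) (L^(k+1))' = (k+1) L^k ((1 + c t) L'). *)
Lemma coef_log_poly_exp_rec k i : (i < M)%N ->
  (log_poly ^+ k.+1)`_i.+1 * i.+1%:R + c * i%:R * (log_poly ^+ k.+1)`_i
  = k.+1%:R * (a * c) * (log_poly ^+ k)`_i.
Proof.
move=> lt_iM; set L := log_poly.
have <- : ((1 + c *: 'X) * (L ^+ k.+1)^`())`_i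
          = (L ^+ k.+1)`_i.+1 * i.+1%:R + c * i%:R * (L ^+ k.+1)`_i.
  rewrite mulrDl mul1r -scalerAl coefD coefZ coefXM !coef_deriv.
  case: i {lt_iM} => [|i] /=; first by rewrite !mulr0 mul0r mulr1.
  by rewrite !mulr_natr mulrnAl mulrnAr.
rewrite deriv_exp /= mulrnAr (mulrA (1 + c *: 'X)) coefMn coefM.
rewrite big_ord_recl big1 => [|j _].
  rewrite /= subn0 coef_log_poly_ode; last exact: leq_ltn_trans (leq0n i) lt_iM.
  by rewrite addr0 mul1r mulr_natl mulrnAl.
by rewrite /= coef_log_poly_ode ?mul0r // (leq_ltn_trans (ltn_ord j) lt_iM).
Qed.

Lemma coef_log_poly_exp k i : (i <= M)%N ->
  (log_poly ^+ k)`_i = a ^+ k * k`!%:R * c ^+ i / i`!%:R * (S1 i k)%:~R.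
Proof.
elim: k i => [|k IHk] i le_iM.
  case: i {le_iM} => [|i]; rewrite coef1 /=; last by rewrite S1_n0 mulr0.
  by rewrite S1_0n /= !expr0 !mul1r invr1 mulr1.
elim: i le_iM => [|i IHi] lt_iM.
  by rewrite exprS coef0M coef_log_poly0 mul0r S1_0n mulr0.
pose F j l := a ^+ l * l`!%:R * c ^+ j / j`!%:R * (S1 j l)%:~R.
have F_rec : F i.+1 k.+1 * i.+1%:R + c * i%:R * F i k.+1 = k.+1%:R * (a * c) * F i k.
  rewrite /F S1S rmorphB rmorphM /= -pmulrn !factS !natrM !exprS.
  by field; rewrite nat1r natS_neq0 fact_neq0.
have := coef_log_poly_exp_rec k lt_iM.
rewrite IHi ?IHk ?(ltnW lt_iM) // -F_rec.
by move=> /addIr/(mulIf (natS_neq0 i)).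
Qed.

Lemma coef_exp_log_poly i : (i < M)%N ->
  (exp_poly \Po log_poly)`_i = gbinom a i * c ^+ i.
Proof.
move=> lt_iM; rewrite (coef_comp_poly_XM _ _ lt_iM).
rewrite (eq_bigr (fun j : 'I_M => c ^+ i / i`!%:R * ((S1 i j)%:~R * a ^+ j))).
  by rewrite -mulr_sumr sum_S1_expr // /gbinom; ring.
move=> j _; rewrite coef_poly ltn_ord coef_log_poly_exp ?(ltnW lt_iM) // /exp_ser.
by field; rewrite !fact_neq0.
Qed.

End LogSeries.

Section CauchyProduct.
Variable K : fieldType.

Lemma eq_smul (u u' v v' : nat -> K) n :
  (forall k, (k <= n)%N -> u k = u' k) -> (forall k, (k <= n)%N -> v k = v' k) ->
  smul u v n = smul u' v' n.
Proof.
by move=> eq_u eq_v; apply: eq_bigr => k _; rewrite eq_u ?eq_v ?leq_subr // -ltnS.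
Qed.

Lemma smul_coef (p r : {poly K}) n :
  smul (fun k => p`_k) (fun k => r`_k) n = (p * r)`_n.
Proof. by rewrite coefM. Qed.

Lemma smul_inj (u x y : nat -> K) M : u 0%N != 0 ->
  (forall i, (i < M)%N -> smul u x i = smul u y i) ->
  forall i, (i < M)%N -> x i = y i.
Proof.
move=> u0 eq_xy; elim/ltn_ind => i IH lt_iM.
have := eq_xy i lt_iM; rewrite /smul !big_ord_recl !subn0.
rewrite [X in _ + X = _](eq_bigr (fun j : 'I_i => u j.+1 * y (i - j.+1)%N)).
  by move=> /addIr/(mulfI u0).
move=> j _; have lt_ji := ltn_ord j; rewrite lift0 IH //; lia.
Qed.

Lemma smul_comp_poly_XM (u v w : nat -> K) (r : {poly K}) M :
  (forall j, (j < M)%N -> smul u v j = w j) ->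
  forall i, (i < M)%N ->
  smul (fun k => (\poly_(j < M) u j \Po ('X * r))`_k)
       (fun k => (\poly_(j < M) v j \Po ('X * r))`_k) i
  = (\poly_(j < M) w j \Po ('X * r))`_i.
Proof.
move=> eq_uvw i lt_iM; rewrite smul_coef -comp_polyM.
apply: eq_coef_comp_poly_XM lt_iM => j lt_jM; rewrite coef_poly lt_jM -eq_uvw //.
rewrite -smul_coef; apply: eq_smul => k le_kj.
all: by rewrite coef_poly (leq_ltn_trans le_kj lt_jM).
Qed.

End CauchyProduct.

Section CatalanDaeheeFromBernoulli.
Variables (K : fieldType) (q lq : K) (B d : nat -> K).
Hypothesis charK : [pchar K] =i pred0.
Hypotheses (hq : q != 1) (hB : is_qBernoulli q lq B) (hd : is_qCatalanDaehee q lq d).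

Local Notation L N := (log_poly (2^-1 : K) (-4) N).

Lemma coef_half_log_poly N i : (i <= N)%N -> (L N)`_i = 2^-1 * log1m4_ser K i.
Proof.
case: i => [|i] le_iN; first by rewrite coef_log_poly0 /log1m4_ser mulr0.
rewrite coef_log_polyS // opprK /log1m4_ser /= exprS.
by field; rewrite nat1r !natS_neq0.
Qed.

Lemma coef_qsqrt_comp N i : (i < N)%N ->
  (\poly_(j < N) (q * exp_ser K j - (j == 0)%:R) \Po L N)`_i
  = q * sqrt1m4_ser K i - (i == 0)%:R.
Proof.
move=> lt_iN.
rewrite (eq_coef_comp_poly_XM (p' := q *: exp_poly K N - 1) _ _ lt_iN).
  rewrite comp_polyB comp_polyZ -polyC1 comp_polyC polyC1.
  by rewrite coefB coefZ coef_exp_log_poly // coef1.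
by move=> j lt_jN; rewrite coefB coefZ !coef_poly lt_jN coef1.
Qed.

Lemma coef_qBernoulli_rhs_comp N i : (i < N)%N ->
  (\poly_(j < N) (if j == 0%N then q - 1 else if j == 1%N then (q - 1) / lq else 0)
     \Po L N)`_i
  = (if i == 0%N then q - 1 else 0) + (q - 1) / lq * 2^-1 * log1m4_ser K i.
Proof.
move=> lt_iN.
rewrite (eq_coef_comp_poly_XM (p' := (q - 1)%:P + ((q - 1) / lq) *: 'X) _ _ lt_iN).
  rewrite comp_polyD comp_polyC comp_polyZ comp_polyX coefD coefC coefZ.
  by rewrite coef_half_log_poly ?(ltnW lt_iN) // mulrA.
move=> j lt_jN; rewrite coef_poly lt_jN coefD coefC coefZ coefX.
by case: j {lt_jN} => [|[|j]] /=; rewrite ?mulr0 ?addr0 ?mulr1 ?add0r.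
Qed.

Lemma qCatalanDaehee_eq_comp N i : (i < N)%N ->
  d i = (\poly_(j < N) (B j / j`!%:R) \Po L N)`_i.
Proof.
pose sq k := q * sqrt1m4_ser K k - (k == 0)%:R.
apply: (@smul_inj _ sq) => [|k lt_kN].
  by rewrite /sq /sqrt1m4_ser /gbinom big_ord0 fact0 !expr0 invr1 !mulr1 subr_eq0.
rewrite hd -(coef_qBernoulli_rhs_comp lt_kN).
rewrite -(smul_comp_poly_XM _ (fun j _ => hB j) lt_kN).
by apply: eq_smul => j le_jk //; rewrite coef_qsqrt_comp // (leq_ltn_trans le_jk).
Qed.

End CatalanDaeheeFromBernoulli.

Theorem theorem2 (K : fieldType) (hK : [pchar K] =i pred0) (q lq : K)
  (hq : q != 1) (hlq : lq != 0) (B d : nat -> K)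
  (hB : is_qBernoulli q lq B) (hd : is_qCatalanDaehee q lq d) (n : nat) :
  (-1) ^+ n * d n
  = (n`!%:R)^-1 * \sum_(m < n.+1) 2 ^+ (2 * n - m) * B m * (S1 n m)%:~R.
Proof.
rewrite (qCatalanDaehee_eq_comp hK hq hB hd (ltnSn n)).
rewrite (coef_comp_poly_XM _ _ (ltnSn n)) !mulr_sumr; apply: eq_bigr => m _.
rewrite coef_poly ltn_ord coef_log_poly_exp //.
have le_m2n : (m <= 2 * n)%N by have := ltn_ord m; lia.
have two_neq0 : (2 : K) != 0 := natS_neq0 hK 1.
have sign : (-1) ^+ n * (-4) ^+ n = 2 ^+ (2 * n) :> K.
  by rewrite -exprMn mulN1r opprK exprM; congr (_ ^+ _); ring.
transitivity ((-1) ^+ n * (-4) ^+ n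
  * (B m / m`!%:R * ((2^-1) ^+ m * m`!%:R) / n`!%:R * (S1 n m)%:~R)); first by ring.
rewrite sign (exprB le_m2n) ?unitfE // exprVn.
by field; rewrite expf_neq0 ?fact_neq0.
Qed.
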